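(* Let $n$ be one of the integers for which $\mathbb{Z}[\xi_n]$ has class number one, $\mathcal{M}_n=\mathbb{Z}[\xi_n]$, and $I$ a principal ideal of $\mathcal{M}_n$ of finite index, with $\Lambda\subset\mathbb{R}^{\varphi(n)}$ the lattice representing $\mathcal{M}_n$ and $L$ the sublattice representing $I$. For the Bravais coloring of $\mathcal{M}_n$ determined by $I$, the color symmetry group satisfies $H=T(G)\rtimes D_N$ if and only if $\phi_2(L)=L$.
   Context: Standing assumption: $n\in\{3,4,5,7,8,9,11,12,13,15,16,17,19,20,21,24,25,27,28,32,33,35,36,40,44,45,48,60,84\}$ (the values for which $\mathcal{M}_n=\mathbb{Z}[\xi_n]$, $\xi_n=\exp(2\pi i/n)$, is a principal ideal domain). Let $\varphi$ be Euler's function and $N=n$ if $n$ is even, $N=2n$ if $n$ is odd. Using the $\mathbb{Z}$-basis $\{1,\xi_n,\dots,\xi_n^{\varphi(n)-1}\}$ of $\mathcal{M}_n$, each element is identified with its integer coordinate vector, so $\mathcal{M}_n$ becomes a lattice $\Lambda=\mathbb{Z}^{\varphi(n)}\subset\mathbb{R}^{\varphi(n)}$, and a principal ideal $I$ of index $\ell$ becomes a sublattice $L\subseteq\Lambda$ of index $\ell$. Let $\phi_1$ be the linear map of $\mathbb{R}^{\varphi(n)}$ induced by multiplication by $\exp(2\pi i/N)$ (an $N$-fold rotation) and $\phi_2$ the linear map induced by complex conjugation (a reflection); they generate a group $D_N$, dihedral of order $2N$. Let $T(G)=\{t_y: x\mapsto x+y \mid y\in\Lambda\}$. The symmetry group of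 $\Lambda$ is $G=T(G)\rtimes D_N$. The Bravais coloring determined by $I$ assigns to each element of $\Lambda$ one of $\ell$ colors, two elements getting the same color iff they lie in the same coset of $L$ in $\Lambda$. The color symmetry group $H$ is the set of $g\in G$ that permute the colors, i.e. for every coset $x+L$ the image $g(x+L)$ is again a coset of $L$. *)

(* the cyclotomic ring Z[xi_n] is modelled inside algC. *)
From HB Require Import structures.
From mathcomp Require Import all_boot all_order all_algebra all_field.
Unset Printing Implicit Defensive.
Import Order.TTheory GRing.Theory Num.Theory.
Local Open Scope ring_scope.

(* The values of n for which Z[xi_n] is a PID (standing assumption). *)
Definition pid_list : seq nat :=
  [:: 3; 4; 5; 7; 8; 9; 11; 12; 13; 15; 16; 17; 19; 20; 21; 24; 25; 27; 28;
      32; 33; 35; 36; 40; 44; 45; 48; 60; 84]%N.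

Definition Nof (n : nat) : nat := if odd n then (2 * n)%N else n.

(* xi_n = exp(2 pi i / n): n.-root (-1) is the n-th root of -1 with minimal
   nonnegative argument, i.e. exp(i pi / n); its square is exp(2 pi i / n). *)
Definition xi (n : nat) : algC := (n.-root (-1)) ^+ 2.

(* exp(2 pi i / N) = (N/2).-root (-1) (N is even). *)
Definition zetaN (n : nat) : algC := ((Nof n)./2.-root (-1)).

Definition in_Mn (n : nat) (x : algC) : Prop :=
  exists p : {poly int}, x = (map_poly intr p).[xi n].

Definition Lam (n : nat) := 'rV[int]_(totient n).

Definition coord (n : nat) (v : Lam n) : algC :=
  \sum_(i < totient n) (v 0 i)%:~R * xi n ^+ i.

Definition in_ideal (n : nat) (a x : algC) : Prop :=
  exists m, in_Mn n m /\ x = a * m.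

Definition inL (n : nat) (a : algC) (v : Lam n) : Prop := in_ideal n a (coord n v).

Definition finite_index (n : nat) (a : algC) : Prop :=
  exists s : seq (Lam n), forall v : Lam n, exists2 w, w \in s & inL n a (v - w).

Definition induced_by (n : nat) (f : algC -> algC) (g : Lam n -> Lam n) : Prop :=
  forall v, coord n (g v) = f (coord n v).

Definition is_phi1 (n : nat) (g : Lam n -> Lam n) : Prop :=
  induced_by n (fun x => zetaN n * x) g.

Definition is_phi2 (n : nat) (g : Lam n -> Lam n) : Prop :=
  induced_by n (fun x => x^*) g.

(* D_N: the group generated by phi_1 and phi_2 (both of finite order, so the
   generated monoid is the generated group). *)
Inductive inDN (n : nat) : (Lam n -> Lam n) -> Prop :=
  | DN_id : inDN n (fun v => v)
  | DN_phi1 (f g : Lam n -> Lam n) : is_phi1 n f -> inDN n g -> inDN n (f \o g)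
  | DN_phi2 (f g : Lam n -> Lam n) : is_phi2 n f -> inDN n g -> inDN n (f \o g).

Definition inG (n : nat) (g : Lam n -> Lam n) : Prop :=
  exists (y : Lam n) (d : Lam n -> Lam n), inDN n d /\ forall v, g v = d v + y.

Definition permutes_colors (n : nat) (a : algC) (g : Lam n -> Lam n) : Prop :=
  forall x : Lam n, exists x' : Lam n, forall w : Lam n,
    (exists l, inL n a l /\ w = g (x + l)) <-> (exists l, inL n a l /\ w = x' + l).

Definition inH (n : nat) (a : algC) (g : Lam n -> Lam n) : Prop :=
  inG n g /\ permutes_colors n a g.

(* Maps of the lattice are only known through their effect on coordinates, so
   everything rests on the injectivity of the coordinate map, i.e. on xi being a
   primitive n-th root of unity.  This holds because y = n.-root (-1), the root
   of X^n + 1 of least nonnegative argument, generates all 2n-th roots of unity: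
   if k maximizes Re (x y^k), then u = x y^k is a root of unity whose real part
   does not grow under rotation by y or y^*, and comparing with y forces u = 1.
   Given injectivity, every element of D_N acts additively; phi_1, being
   multiplication by a root of unity lying in M_n, always maps L = a M_n onto
   itself, so when phi_2 does too, each x |-> d x + y permutes the cosets of L.
   Conversely phi_2 fixes 0, so if it permutes the cosets it must fix L. *)

From Pilot Require Import Defs.
From HB Require Import structures.
From mathcomp Require Import all_boot all_order all_algebra all_field.
From mathcomp Require Import lra zify.
Set Implicit Arguments.
Unset Strict Implicit.
Unset Printing Implicit Defensive.

Import Order.TTheory GRing.Theory Num.Theory.
Local Open Scope ring_scope.

Lemma unit_circle_rot_fixed (R : realFieldType) (a b c s : R) :
  a ^+ 2 + b ^+ 2 = 1 -> c ^+ 2 + s ^+ 2 = 1 -> 0 <= s -> ~ (c = 1 /\ s = 0) ->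
  a * c - b * s <= a -> a * c + b * s <= a ->
  a * c - b * s <= c -> a * c + b * s <= c -> a = 1 /\ b = 0.
Proof.
move=> hab hcs hs cs_neq h1 h2 h3 h4.
have hc1 : c < 1.
  rewrite lt_def (_ : c <= 1) ?andbT; last by nra.
  by apply/eqP => c1; apply: cs_neq; split=> //; nra.
have ha0 : 0 <= a by nra.
have hbs1 : `|b| * s <= a * (1 - c).
  by case: (lerP 0 b) => hb; [rewrite ger0_norm | rewrite ltr0_norm]; nra.
have hbs2 : `|b| * s <= c * (1 - a).
  by case: (lerP 0 b) => hb; [rewrite ger0_norm | rewrite ltr0_norm]; nra.
suff a1 : a = 1 by split=> //; nra.
apply: le_anti; rewrite (_ : a <= 1) /=; last by nra.
rewrite leNgt; apply/negP => ha1.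
have hc0 : 0 <= c by nra.
have hb2 : `|b| ^+ 2 = (1 - a) * (1 + a) by rewrite real_normK ?num_real; nra.
have : (`|b| * s) ^+ 2 <= a * (1 - c) * (c * (1 - a)).
  by rewrite expr2; apply: ler_pM; rewrite ?mulr_ge0 ?normr_ge0 //; nra.
nra.
Qed.

Lemma Re_rot_le_eq1 (u y : algC) : `|u| = 1 -> `|y| = 1 -> 0 <= 'Im y -> y != 1 ->
  'Re (u * y) <= 'Re u -> 'Re (u * y^*) <= 'Re u ->
  'Re (u * y) <= 'Re y -> 'Re (u * y^*) <= 'Re y -> u = 1.
Proof.
move=> nu ny Imy y_neq1; rewrite !ReM Re_conj Im_conj mulrN opprK => h1 h2 h3 h4.
pose re x : algR := in_algR (Creal_Re x).
pose im x : algR := in_algR (Creal_Im x).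
have circle x : `|x| = 1 -> re x ^+ 2 + im x ^+ 2 = 1.
  by move=> nx; apply: val_inj; rewrite /= -!expr2 -normC2_Re_Im nx expr1n.
have [/(congr1 algRval) /= Reu /(congr1 algRval) /= Imu] :
    re u = 1 /\ im u = 0.
  apply: (unit_circle_rot_fixed (circle u nu) (circle y ny)) => //.
  move=> [/(congr1 algRval) /= Rey /(congr1 algRval) /= Imy0].
  by move/eqP: y_neq1; apply; rewrite [y]Crect Rey Imy0 mulr0 addr0.
by rewrite [u]Crect Reu Imu mulr0 addr0.
Qed.

Lemma Re_le_rootC n (x z : algC) : (0 < n)%N -> x \is Num.real -> z ^+ n = x ->
  'Re z <= 'Re (n.-root x).
Proof.
move=> n_gt0 xR zn; have [Imz_ge0 | Imz_le0] := real_ge0P (Creal_Im z).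
  exact: rootC_Re_max.
rewrite -Re_conj; apply: rootC_Re_max => //.
  by rewrite -rmorphXn zn; apply: conj_Creal.
by rewrite Im_conj oppr_ge0 ltW.
Qed.

Section RootOfMinusOne.
Variable n : nat.
Hypothesis n_gt0 : (0 < n)%N.
Let y := n.-root (-1 : algC).

Let yn : y ^+ n = -1. Proof. exact: rootCK. Qed.
Let y2n : y ^+ (2 * n) = 1. Proof. by rewrite mulnC exprM yn sqrrN expr1n. Qed.
Let norm_y : `|y| = 1.
Proof. by apply/eqP; rewrite -(pexpr_eq1 n_gt0) ?normr_ge0 // -normrX yn normrN1. Qed.

Let Im_y_ge0 : 0 <= 'Im y.
Proof.
rewrite /y; case: n n_gt0 => [|[|n']] // _; last exact: Im_rootC_ge0.
by rewrite root1C (Creal_ImP _ _) ?rpredN1.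
Qed.

Let Re_le_y z : z ^+ n = -1 -> 'Re z <= 'Re y.
Proof. by apply: Re_le_rootC; rewrite ?rpredN1. Qed.

Let y_neq1 : y != 1.
Proof.
apply/eqP => y1; move: yn; rewrite y1 expr1n => /eqP.
by rewrite -subr_eq0 opprK (pnatr_eq0 _ 2).
Qed.

Let conj_y : y^* = y ^+ (2 * n).-1.
Proof.
have y0 : y != 0 by rewrite -normr_eq0 norm_y oner_eq0.
by apply: (mulfI y0); rewrite -exprS prednK ?muln_gt0 // y2n -normCK norm_y expr1n.
Qed.

Lemma unity_Re_rot_le_eq1 u : u ^+ (2 * n) = 1 ->
  'Re (u * y) <= 'Re u -> 'Re (u * y^*) <= 'Re u -> u = 1.
Proof.
move=> u2n Re_uy Re_uy'.
have norm_u : `|u| = 1.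
  apply/eqP; rewrite -(@pexpr_eq1 _ _ (2 * n)) ?muln_gt0 ?normr_ge0 //.
  by rewrite -normrX u2n normr1.
have un : u ^+ n = 1 \/ u ^+ n = -1.
  have /eqP : (u ^+ n) ^+ 2 = 1 by rewrite -exprM mulnC.
  by rewrite sqrf_eq1 => /orP[] /eqP; [left | right].
have [Re_uy_y Re_uy'_y] : 'Re (u * y) <= 'Re y /\ 'Re (u * y^*) <= 'Re y.
  case: un => un.
    split; apply: Re_le_y; rewrite exprMn un mul1r -?rmorphXn yn //.
    exact: rmorphN1.
  by split; [apply: le_trans Re_uy _ | apply: le_trans Re_uy' _]; apply: Re_le_y.
exact: Re_rot_le_eq1 norm_u norm_y Im_y_ge0 y_neq1 Re_uy Re_uy' Re_uy_y Re_uy'_y.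
Qed.

Lemma rootCN1_generates x : x ^+ (2 * n) = 1 -> exists k, x = y ^+ k.
Proof.
move=> x2n; set m := (2 * n)%N.
have m_gt0 : (0 < m)%N by rewrite muln_gt0.
have [k _ kmax] := @arg_maxP _ _ 'I_m (Ordinal m_gt0) predT
  (fun k => in_algR (Creal_Re (x * y ^+ k))) isT.
have y_mod j : y ^+ (j %% m) = y ^+ j.
  by rewrite {2}(divn_eq j m) exprD mulnC exprM y2n expr1n mul1r.
have u1 : x * y ^+ k = 1.
  apply: unity_Re_rot_le_eq1; first by rewrite exprMn x2n exprAC y2n expr1n mulr1.
    have := kmax (Ordinal (ltn_pmod k.+1 m_gt0)) isT.
    by rewrite /= y_mod exprS (mulrC y) mulrA.
  have := kmax (Ordinal (ltn_pmod (k + m.-1) m_gt0)) isT.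
  by rewrite /= y_mod exprD -conj_y mulrA.
exists (m - k)%N.
have yk_inv : y ^+ k * y ^+ (m - k) = 1 by rewrite -exprD subnKC ?y2n // ltnW.
by rewrite -[x]mulr1 -yk_inv mulrA u1 mul1r.
Qed.

Lemma prim_rootCN1 : (2 * n).-primitive_root y.
Proof.
have m_gt0 : (0 < 2 * n)%N by rewrite muln_gt0.
have [p p_prim] := C_prim_root_exists m_gt0.
have [k pk] := rootCN1_generates (prim_expr_order p_prim).
have [j yj] := prim_rootP p_prim y2n.
rewrite yj prim_root_exp_coprime //.
have jk1 : 1 = j * k %[mod 2 * n].
  by apply/eqP; rewrite -(eq_prim_root_expr p_prim) expr1 exprM -yj -pk.
suff : coprime (j * k) (2 * n) by rewrite coprimeMl => /andP[].
by rewrite -coprime_modl -jk1 modn_small ?coprime1n //; lia.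
Qed.

End RootOfMinusOne.

Lemma prim_xi n : (0 < n)%N -> n.-primitive_root (xi n).
Proof.
by move=> n_gt0; have := exp_prim_root (prim_rootCN1 n_gt0) 2; rewrite gcdnMr mulKn.
Qed.

Lemma coord_is_zmod_morphism n : zmod_morphism (Defs.coord n).
Proof.
move=> u v; rewrite /Defs.coord -sumrB; apply: eq_bigr => i _.
by rewrite !mxE rmorphB mulrBl.
Qed.

HB.instance Definition _ n :=
  GRing.isZmodMorphism.Build (Lam n) algC (Defs.coord n) (@coord_is_zmod_morphism n).

Lemma coord0 n : Defs.coord n 0 = 0. Proof. exact: raddf0. Qed.
Lemma coordN n : {morph Defs.coord n : u / - u}. Proof. exact: raddfN. Qed.
Lemma coordD n : {morph Defs.coord n : u v / u + v}. Proof. exact: raddfD. Qed.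

Lemma coord_inj n : (0 < n)%N -> injective (Defs.coord n).
Proof.
move=> n_gt0; apply: raddf_inj => v cv0.
pose q : {poly rat} := \sum_(i < totient n) ((v 0 i)%:~R : rat) *: 'X^i.
have q_root : root (map_poly ratr q) (xi n).
  rewrite /root rmorph_sum horner_sum; apply/eqP; rewrite -[RHS]cv0 /Defs.coord.
  apply: eq_bigr => i _.
  by rewrite /= map_polyZ map_polyXn hornerZ hornerXn rmorph_int.
have [p [Dp _] p_dvd] := minCpolyP (xi n).
have size_p : size p = (totient n).+1.
  have := size_cyclotomic (xi n) n.
  by rewrite -(minCpoly_cyclotomic (prim_xi n_gt0)) Dp size_map_poly.
have size_q : (size q <= totient n)%N.
  apply: leq_trans (size_sum _ _ _) _; apply/bigmax_leqP => i _.
  by apply: leq_trans (size_scale_leq _ _) _; rewrite size_polyXn.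
have q0 : q = 0.
  apply/eqP; apply: contraT => q_neq0.
  have p_dvd_q : (p %| q)%R by rewrite -p_dvd.
  by have := leq_trans (dvdp_leq q_neq0 p_dvd_q) size_q; rewrite size_p ltnn.
apply/rowP => j; have /eqP := congr1 (fun r : {poly rat} => r`_j) q0.
rewrite coef0 coef_sumMXn (big_pred1 j) ?mxE ?intr_eq0 => [/eqP //|i].
by rewrite /= -val_eqE.
Qed.

Lemma in_Mn0 n : in_Mn n 0.
Proof. by exists 0; rewrite rmorph0 horner0. Qed.

Lemma in_MnD n x z : in_Mn n x -> in_Mn n z -> in_Mn n (x + z).
Proof. by move=> [p ->] [q ->]; exists (p + q); rewrite rmorphD hornerD. Qed.

Lemma in_MnN n x : in_Mn n x -> in_Mn n (- x).
Proof. by move=> [p ->]; exists (- p); rewrite rmorphN hornerN. Qed.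

Lemma in_MnM n x z : in_Mn n x -> in_Mn n z -> in_Mn n (x * z).
Proof. by move=> [p ->] [q ->]; exists (p * q); rewrite rmorphM hornerM. Qed.

Lemma in_Mn_unity n x : (0 < n)%N -> x ^+ n = 1 -> in_Mn n x.
Proof.
move=> n_gt0 /(prim_rootP (prim_xi n_gt0)) [i ->].
by exists 'X^i; rewrite map_polyXn hornerXn.
Qed.

Lemma Nof_gt0 n : (0 < n)%N -> (0 < Nof n)%N.
Proof. by rewrite /Nof; case: ifP; rewrite ?muln_gt0. Qed.

Lemma odd_Nof n : odd (Nof n) = false.
Proof. by rewrite /Nof; case: ifP => // _; rewrite oddM. Qed.

Lemma half_Nof_gt0 n : (0 < n)%N -> (0 < (Nof n)./2)%N.
Proof.
rewrite /Nof; case: ifP => [_ | n_even n_gt0]; first by rewrite mul2n doubleK.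
by rewrite half_gt0; case: n n_gt0 n_even => [|[]].
Qed.

Lemma zetaN_Nof n : (0 < n)%N -> zetaN n ^+ Nof n = 1.
Proof.
move=> n_gt0; have := odd_double_half (Nof n); rewrite odd_Nof add0n -muln2 => <-.
by rewrite exprM rootCK ?half_Nof_gt0 // sqrrN expr1n.
Qed.

Lemma zetaN_in_Mn n : (0 < n)%N -> in_Mn n (zetaN n).
Proof.
move=> n_gt0; have := zetaN_Nof n_gt0; rewrite /zetaN /Nof.
case: ifP => n_odd zetaN1; last exact: in_Mn_unity.
rewrite mul2n doubleK -[_.-root _]opprK; apply/in_MnN/in_Mn_unity => //.
by rewrite exprNn rootCK // -signr_odd n_odd mulN1r opprK.
Qed.

Lemma inL_coord0 n a v : Defs.coord n v = 0 -> inL n a v.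
Proof. by move=> cv0; exists 0; rewrite cv0 mulr0; split=> //; apply: in_Mn0. Qed.

Lemma inLD n a u v : inL n a u -> inL n a v -> inL n a (u + v).
Proof.
move=> [m1 [m1M cu]] [m2 [m2M cv]]; exists (m1 + m2).
by rewrite coordD cu cv mulrDr; split=> //; apply: in_MnD.
Qed.

Lemma inLN n a u : inL n a u -> inL n a (- u).
Proof.
move=> [m [mM cu]]; exists (- m).
by rewrite coordN cu mulrN; split=> //; apply: in_MnN.
Qed.

Definition stabilizes_L n a (d : Lam n -> Lam n) : Prop :=
  forall w, (exists l, inL n a l /\ w = d l) <-> inL n a w.

Lemma stabilizes_L_id n a : stabilizes_L a (@id (Lam n)).
Proof. by move=> w; split=> [[l [lL ->]] | wL] //; exists w. Qed.

Lemma stabilizes_L_comp n a (f g : Lam n -> Lam n) :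
  stabilizes_L a f -> stabilizes_L a g -> stabilizes_L a (f \o g).
Proof.
move=> fL gL w; rewrite -fL; split=> [[l [lL ->]] | [l [lL ->]]].
  by exists (g l); split=> //; apply/gL; exists l.
by have [l' [l'L ->]] := (gL l).2 lL; exists l'.
Qed.

Lemma permutes_colors_affine n a (d g : Lam n -> Lam n) y :
  {morph d : u v / u + v} -> stabilizes_L a d -> (forall v, g v = d v + y) ->
  permutes_colors n a g.
Proof.
move=> dD dL gE x; exists (d x + y) => w.
split=> [[l [lL ->]] | [l [lL ->]]].
  by exists (d l); split; [apply/dL; exists l | rewrite gE dD addrAC].
have [l' [l'L ->]] := (dL l).2 lL.
by exists l'; rewrite gE dD addrAC.
Qed.

Lemma stabilizes_L_of_permutes_colors n a (g : Lam n -> Lam n) :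
  permutes_colors n a g -> inL n a (g 0) -> stabilizes_L a g.
Proof.
move=> gP g0L; have [x' x'E] := gP 0.
have /x'E [l [lL g0E]] : exists l, inL n a l /\ g 0 = g (0 + l).
  by exists 0; rewrite add0r; split=> //; apply/inL_coord0/coord0.
have x'L : inL n a x'.
  by rewrite -[x'](addrK l) -g0E; apply: inLD g0L (inLN lL).
move=> w; split=> [[l' [l'L ->]] | wL].
  have [|l'' [l''L ->]] := (x'E (g l')).1; last exact: inLD.
  by exists l'; rewrite add0r.
have [|l' [l'L ->]] := (x'E w).2; last by exists l'; rewrite add0r.
by exists (w - x'); rewrite subrKC; split=> //; apply: inLD wL (inLN x'L).
Qed.

Lemma induced_additive n (h : algC -> algC) (f : Lam n -> Lam n) : (0 < n)%N ->
  {morph h : x y / x + y} -> induced_by n h f -> {morph f : u v / u + v}.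
Proof.
by move=> n_gt0 hD fE u v; apply: (coord_inj n_gt0); rewrite coordD !fE coordD hD.
Qed.

Lemma induced_unity_mul_stabilizes n a z k (f : Lam n -> Lam n) :
  (0 < n)%N -> in_Mn n z -> (0 < k)%N -> z ^+ k = 1 ->
  induced_by n (fun x => z * x) f -> stabilizes_L a f.
Proof.
move=> n_gt0 zM k_gt0 zk fE.
have fL l : inL n a l -> inL n a (f l).
  move=> [m [mM cl]]; exists (z * m).
  by rewrite fE cl mulrCA; split=> //; apply: in_MnM.
have iter_fE j v : Defs.coord n (iter j f v) = z ^+ j * Defs.coord n v.
  by elim: j => [|j IHj]; rewrite ?mul1r // iterS fE IHj exprS mulrA.
move=> w; split=> [[l [lL ->]] | wL]; first exact: fL.
exists (iter k.-1 f w); split; first by elim: k.-1 => //= j; apply: fL.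
by apply: (coord_inj n_gt0); rewrite -iterS prednK // iter_fE zk mul1r.
Qed.

Lemma inDN_additive n (d : Lam n -> Lam n) : (0 < n)%N -> inDN n d ->
  {morph d : u v / u + v}.
Proof.
move=> n_gt0; elim=> {d} [// | f g fE _ gD | f g fE _ gD] u v /=.
  by rewrite gD (induced_additive n_gt0 _ fE) // => x y; rewrite mulrDr.
by rewrite gD (induced_additive n_gt0 _ fE) // => x y; rewrite rmorphD.
Qed.

Lemma inDN_stabilizes n a (d : Lam n -> Lam n) : (0 < n)%N ->
  (forall f, is_phi2 n f -> stabilizes_L a f) -> inDN n d -> stabilizes_L a d.
Proof.
move=> n_gt0 phi2L.
elim=> {d} [|f g fE _ gL|f g fE _ gL]; first exact: stabilizes_L_id.
  apply: stabilizes_L_comp gL.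
  exact: induced_unity_mul_stabilizes n_gt0 (zetaN_in_Mn n_gt0) (Nof_gt0 n_gt0)
    (zetaN_Nof n_gt0) fE.
by apply: stabilizes_L_comp gL; apply: phi2L.
Qed.

Theorem theorem3p1p2 (n : nat) (hn : n \in pid_list) (a : algC)
  (ha : in_Mn n a) (hfin : finite_index n a) :
  (forall g : Lam n -> Lam n, inH n a g <-> inG n g) <->
  (forall f : Lam n -> Lam n, is_phi2 n f ->
     forall w : Lam n, (exists l, inL n a l /\ w = f l) <-> inL n a w).
Proof.
have n_gt0 : (0 < n)%N by move: hn; apply/allP.
split=> [HG f fE | phi2L g].
  have /HG [_ fP] : inG n f.
    by exists 0, (f \o id); split=> [|v]; [apply: DN_phi2 fE (DN_id n) | rewrite addr0].
  apply: stabilizes_L_of_permutes_colors fP _.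
  by apply: inL_coord0; rewrite fE coord0 rmorph0.
split=> [[] // | gG]; split=> //.
have [y [d [dDN gE]]] := gG.
exact: permutes_colors_affine (inDN_additive n_gt0 dDN)
  (inDN_stabilizes n_gt0 phi2L dDN) gE.
Qed.
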